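(* Let $d\ge 0$ and $t\ge 0$ be integers and let $\beta=\left\lfloor\frac{t+1}{d+1}\right\rfloor$, and assume $\beta>1$. For any simplicial complex $K$ of dimension $d$ containing $m$ simplices, the number of distinct filtrations $f:K\to\{0,1,\ldots,t\}$ is at least $\beta^{m}$. Moreover, if $\beta>(d+1)^{\delta}$ for some constant $\delta>0$, then any data structure that can represent filtrations of the class of all $d$-dimensional simplicial complexes containing $m$ simplices requires $\Omega(m\log t)$ bits to be stored.
   Context: A filtration of a simplicial complex $K$ with range $\{0,1,\ldots,t\}$ is a function $f:K\to\{0,1,\ldots,t\}$ such that $f(\tau)\le f(\sigma)$ whenever $\tau\subseteq\sigma$. A data structure representing a class of objects is an encoding of each object as a bit string such that distinct objects receive distinct encodings; its storage requirement is the maximum length of an encoding. *)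

From HB Require Import structures.
From mathcomp Require Import all_boot all_order all_algebra.
From mathcomp Require Import finmap.
From mathcomp Require Import all_classical all_reals all_analysis.

Set Implicit Arguments.
Unset Strict Implicit.
Unset Printing Implicit Defensive.

Local Open Scope fset_scope.

Definition is_simplicial_complex (K : {fset {fset nat}}) : Prop :=
  forall s, s \in K -> s != fset0 /\
    (forall u : {fset nat}, u `<=` s -> u != fset0 -> u \in K).

Definition complex_of_dim (d : nat) (K : {fset {fset nat}}) : Prop :=
  is_simplicial_complex K /\
  (exists2 s, s \in K & #|` s| = d.+1) /\
  (forall s, s \in K -> #|` s| <= d.+1)%N.

Definition is_filtration (t : nat) (K : {fset {fset nat}})
  (f : {ffun K -> 'I_t.+1}) : bool :=
  [forall s1 : K, forall s2 : K, (val s1 `<=` val s2) ==> (f s1 <= f s2)%N].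

Definition beta (d t : nat) : nat := (t.+1 %/ d.+1)%N.

(* Objects represented by a data structure: a complex together with a filtration of it. *)
Definition FObj (t : nat) := {K : {fset {fset nat}} & {ffun K -> 'I_t.+1}}.

Definition in_class (d m t : nat) (o : FObj t) : Prop :=
  complex_of_dim d (projT1 o) /\ #|` projT1 o| = m /\ is_filtration (projT2 o).

From HB Require Import structures.
From mathcomp Require Import all_boot all_order all_algebra.
From mathcomp Require Import finmap.
From mathcomp Require Import all_classical all_reals all_analysis.
From mathcomp Require Import zify ring lra.

Set Implicit Arguments.
Unset Strict Implicit.
Unset Printing Implicit Defensive.

(* Write b := beta d t, so that b (d+1) <= t+1.  Giving each simplex of
   dimension j a value in the j-th of the d+1 disjoint blocks [j b, (j+1) b)
   of {0,...,t}, freely inside the block, always yields a filtration, since a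
   proper face has strictly smaller dimension; hence there are at least b^m
   filtrations.  An encoding that is injective on them spends at least
   m floor(log2 b) - 1 bits on one of them, and this is of order m log t
   because t < (b+1)(d+1) while (d+1)^delta < b. *)

Import Order.TTheory GRing.Theory Num.Theory.
Local Open Scope fset_scope.

Lemma beta_mul_le (d t : nat) : (beta d t * d.+1 <= t.+1)%N.
Proof. exact: leq_divM. Qed.

Lemma lt_betaS_mul (d t : nat) : (t.+1 < (beta d t).+1 * d.+1)%N.
Proof. exact: ltn_ceil. Qed.

Lemma complex_of_dim_card (d : nat) (K : {fset {fset nat}}) :
  complex_of_dim d K -> forall s, s \in K -> (0 < #|` s| <= d.+1)%N.
Proof.
move=> [cK [_ dimK]] s sK; rewrite dimK // andbT cardfs_gt0.
by have [] := cK s sK.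
Qed.

Lemma ltn_block (b m n x y : nat) :
  (m < n)%N -> (x < b)%N -> (m * b + x < n * b + y)%N.
Proof. by move=> mn xb; nia. Qed.

Section StackedFiltrations.

Variables (d t b : nat) (K : {fset {fset nat}}).
Hypothesis bd_le : (b * d.+1 <= t.+1)%N.
Hypothesis K_card : forall s, s \in K -> (0 < #|` s| <= d.+1)%N.

Lemma stacked_value_lt (g : {ffun K -> 'I_b}) (s : K) :
  ((#|` val s|).-1 * b + g s < t.+1)%N.
Proof.
have /andP [s_gt0 s_le] := K_card (valP s).
rewrite -(prednK s_gt0) in s_le.
have := leq_mul s_le (leqnn b); have := ltn_ord (g s); rewrite mulSn; lia.
Qed.

Definition stacked_filtration (g : {ffun K -> 'I_b}) : {ffun K -> 'I_t.+1} :=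
  [ffun s => Ordinal (stacked_value_lt g s)].

Lemma stacked_filtration_inj : injective stacked_filtration.
Proof.
move=> g1 g2 /ffunP eq_g; apply/ffunP => s; apply/val_inj.
by have /(congr1 val)/eqP := eq_g s; rewrite !ffunE /= eqn_add2l => /eqP.
Qed.

Lemma is_filtration_stacked (g : {ffun K -> 'I_b}) :
  is_filtration (stacked_filtration g).
Proof.
apply/forallP => s1; apply/forallP => s2; apply/implyP => sub12; rewrite !ffunE /=.
have [/val_inj -> // | ne12] := eqVneq (val s1) (val s2).
have lt12 : (#|` val s1| < #|` val s2|)%N.
  by apply: fproper_ltn_card; rewrite fproperEneq ne12 sub12.
have /andP [s1_gt0 _] := K_card (valP s1).
by apply/ltnW/ltn_block; rewrite // -ltnS (ltn_predK lt12) prednK.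
Qed.

Lemma card_filtrations_ge :
  (b ^ #|` K| <= #|[set f : {ffun K -> 'I_t.+1} | is_filtration f]|)%N.
Proof.
apply: (@leq_trans #|[set stacked_filtration g | g in {ffun K -> 'I_b}]|).
  by rewrite card_imset ?card_ffun ?card_ord ?cardfE //; apply: stacked_filtration_inj.
apply/subset_leq_card/fintype.subsetP => _ /imsetP [g _ ->].
by rewrite inE is_filtration_stacked.
Qed.

End StackedFiltrations.

(* The binary numeral of s behind a leading 1, so that codes of bit strings of
   different lengths never collide. *)
Fixpoint bits_code (s : seq bool) : nat :=
  if s is c :: s' then (c + (bits_code s').*2)%N else 1%N.

Lemma bits_code_gt0 (s : seq bool) : (0 < bits_code s)%N.
Proof. by elim: s => //= c s; rewrite -double_gt0; lia. Qed.

Lemma bits_code_lt (s : seq bool) : (bits_code s < 2 ^ (size s).+1)%N.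
Proof. by elim: s => //= c s IH; rewrite expnS; case: c => /=; lia. Qed.

Lemma bits_code_inj : injective bits_code.
Proof.
elim=> [|c1 s1 IH] [|c2 s2] /=.
- by [].
- by have := bits_code_gt0 s2; case: c2 => /=; lia.
- by have := bits_code_gt0 s1; case: c1 => /=; lia.
- move=> eq_code; have eq_c : c1 = c2 by move: eq_code; case: c1; case: c2 => /=; lia.
  by subst c2; congr (_ :: _); apply: IH; move: eq_code; case: c1 => /=; lia.
Qed.

Lemma exists_long_code (T : finType) (S : {set T}) (h : T -> seq bool) (L : nat) :
  {in S &, injective h} -> (2 ^ L < #|S|)%N ->
  exists2 x, x \in S & (L <= size (h x))%N.
Proof.
move=> h_inj.
have [/exists_inP [x xS long_x] _ | ] := boolP [exists x in S, L <= size (h x)].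
  by exists x.
rewrite negb_exists_in => /forall_inP all_short; rewrite ltnNge => /negP[].
rewrite cardE -(size_map (bits_code \o h)) -[X in (_ <= X)%N](size_iota 0).
apply: uniq_leq_size => [|_ /mapP [x + ->]]; rewrite ?mem_enum.
  rewrite map_inj_in_uniq ?enum_uniq // => x y; rewrite !mem_enum => xS yS /=.
  by move/bits_code_inj; apply: h_inj.
move=> /all_short; rewrite -ltnNge => short_x.
by rewrite mem_iota /= (leq_trans (bits_code_lt _)) // leq_exp2l.
Qed.

Lemma pow2_lt_card_filtrations (d t : nat) (K : {fset {fset nat}}) :
  (1 < beta d t)%N -> (0 < #|` K|)%N -> complex_of_dim d K ->
  (2 ^ (trunc_log 2 (beta d t) * #|` K| - 1)
     < #|[set f : {ffun K -> 'I_t.+1} | is_filtration f]|)%N.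
Proof.
move=> b_gt1 K_gt0 dimK; set k := trunc_log 2 _.
have k_gt0 : (0 < k)%N by rewrite trunc_log_gt0 b_gt1.
apply: (@leq_trans (2 ^ (k * #|` K|))).
  by rewrite ltn_exp2l // subn1 prednK // muln_gt0 k_gt0.
apply: (leq_trans _ (card_filtrations_ge (beta_mul_le d t) (complex_of_dim_card dimK))).
by rewrite expnM leq_exp2r // trunc_logP // ltnW.
Qed.

Lemma in_class_filtration (d t : nat) (K : {fset {fset nat}})
    (f : {ffun K -> 'I_t.+1}) :
  complex_of_dim d K -> is_filtration f -> in_class d #|` K| (existT _ K f).
Proof. by move=> dimK fP; split. Qed.

Local Open Scope ring_scope.

Section LogBounds.

Variable R : realType.

Lemma ln_natS_le_trunc_log (b : nat) : ln (b.+1%:R : R) <= (trunc_log 2 b).+1%:R.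
Proof.
have ln2_le1 : ln (2 : R) <= 1 by have := @le_ln1Dx R 1; apply; lra.
apply: (@le_trans _ _ (ln ((2 ^ (trunc_log 2 b).+1)%N%:R))).
  by rewrite ler_ln ?posrE ?ltr0n ?expn_gt0 // ler_nat trunc_log_ltn.
rewrite natrX lnXn ?ltr0n // -[ln _ *+ _]mulr_natr.
by apply: ler_piMl.
Qed.

Lemma ln_le_ln_dim_add_ln_betaS (d t : nat) : (1 < beta d t)%N ->
  ln (t%:R : R) <= ln (d.+1%:R) + ln ((beta d t).+1%:R).
Proof.
move=> b_gt1; have b_mul_le := beta_mul_le d t.
have t_gt0 : (0 < t)%N by have := leq_mul b_gt1 (ltn0Sn d); lia.
rewrite -lnM ?posrE ?ltr0n // ler_ln ?posrE ?ltr0n // -natrM ler_nat mulnC.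
by have := lt_betaS_mul d t; lia.
Qed.

Lemma scaled_ln_le_trunc_log (delta : R) (d t : nat) :
  0 < delta -> (1 < beta d t)%N ->
  (d.+1)%:R `^ delta < (beta d t)%:R ->
  delta * ln (t%:R : R) <= 2 * (trunc_log 2 (beta d t))%:R * (1 + delta).
Proof.
move=> delta_gt0 b_gt1 dim_lt_b; set b := beta d t in b_gt1 dim_lt_b *.
set k := trunc_log 2 b.
have k_ge1 : 1 <= k%:R :> R by rewrite ler1n trunc_log_gt0.
have lnb_le : ln (b%:R : R) <= k.+1%:R.
  apply: le_trans (ln_natS_le_trunc_log b).
  by rewrite ler_ln ?posrE ?ltr0n ?ler_nat //; lia.
have ln_dim_lt : delta * ln (d.+1)%:R < ln (b%:R : R).
  by rewrite -ln_powR ltr_ln ?posrE ?powR_gt0 ?ltr0n //; lia.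
have lnt_le : ln (t%:R : R) <= ln (d.+1)%:R + k.+1%:R.
  apply: (@le_trans _ _ (ln (d.+1)%:R + ln (b.+1)%:R)).
    exact: ln_le_ln_dim_add_ln_betaS.
  by rewrite lerD2l ln_natS_le_trunc_log.
have delta_lnt : delta * ln t%:R <= delta * ln (d.+1)%:R + delta * k.+1%:R.
  by rewrite -mulrDr; apply: ler_wpM2l => //; apply: ltW.
by rewrite -natr1 in lnb_le delta_lnt; nra.
Qed.

Lemma encoding_size_bound (delta : R) (d t m : nat) :
  0 < delta -> (2 <= m)%N -> (1 < beta d t)%N ->
  (d.+1)%:R `^ delta < (beta d t)%:R ->
  delta / (4 * (1 + delta)) * m%:R * ln (t%:R : R)
    <= (trunc_log 2 (beta d t) * m - 1)%:R.
Proof.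
move=> delta_gt0 m_ge2 b_gt1 dim_lt_b.
have := scaled_ln_le_trunc_log delta_gt0 b_gt1 dim_lt_b.
set k := trunc_log 2 _ => lnt_le.
have km_ge2 : (2 <= k * m)%N by rewrite -[2%N]/(1 * 2)%N leq_mul // trunc_log_gt0 b_gt1.
rewrite natrB ?(leq_trans _ km_ge2) // natrM.
have {}km_ge2 : 2 <= k%:R * m%:R :> R by rewrite -natrM ler_nat.
have m_lnt_le : m%:R * (delta * ln (t%:R : R)) <= m%:R * (2 * k%:R * (1 + delta)).
  exact: ler_wpM2l.
rewrite (_ : _ * _ * _ = m%:R * (delta * ln (t%:R : R)) / (4 * (1 + delta))); last first.
  by field; lra.
rewrite ler_pdivrMr; [nra | lra].
Qed.

End LogBounds.

Theorem lemma3 (R : realType) :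
  (forall (d t : nat) (K : {fset {fset nat}}),
     (1 < beta d t)%N -> complex_of_dim d K ->
     (beta d t ^ #|` K| <= #|[set f : {ffun K -> 'I_t.+1} | is_filtration f]|)%N)
  /\
  (forall delta : R, 0 < delta ->
     exists c : R, 0 < c /\ exists m0 : nat,
       forall d t m : nat, (m0 <= m)%N -> (1 < beta d t)%N ->
         (d.+1)%:R `^ delta < (beta d t)%:R ->
         (exists K, complex_of_dim d K /\ #|` K|%fset = m) ->
         forall enc : FObj t -> seq bool,
           (forall o1 o2, in_class d m o1 -> in_class d m o2 ->
              enc o1 = enc o2 -> o1 = o2) ->
           exists o, in_class d m o /\
             c * m%:R * ln (t%:R : R) <= (size (enc o))%:R).
Proof.
split=> [d t K _ dimK | delta delta_gt0].
  exact: card_filtrations_ge (beta_mul_le d t) (complex_of_dim_card dimK).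
exists (delta / (4 * (1 + delta))); split; first by rewrite divr_gt0 //; lra.
exists 2%N => d t m m_ge2 b_gt1 dim_lt_b [K [dimK card_K]] enc enc_inj.
subst m.
pose h (f : {ffun K -> 'I_t.+1}) := enc (existT _ K f).
have h_inj : {in [set f | is_filtration f] &, injective h}.
  move=> f1 f2; rewrite !inE => f1P f2P eq_enc.
  apply: existT_inj2 (enc_inj _ _ _ _ eq_enc); exact: in_class_filtration.
have [f] := exists_long_code h_inj (pow2_lt_card_filtrations b_gt1 (ltnW m_ge2) dimK).
rewrite inE => fP long_f; exists (existT _ K f); split; first exact: in_class_filtration.
apply: le_trans (encoding_size_bound delta_gt0 m_ge2 b_gt1 dim_lt_b) _.
by rewrite ler_nat.
Qed.
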